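(* Let $S$ be a GCD closed set of positive integers with $n\ge 3$ elements. Then $i_+([S])\ge 1$ and $2\le i_-([S])\le n-1$.
   Context: $S$ is GCD closed if $\gcd(x,y)\in S$ for all $x,y\in S$. The LCM matrix $[S]$ of $S=\{x_1,\dots,x_n\}$ has $(i,j)$ entry $\mathrm{lcm}(x_i,x_j)$; $i_+(M)$ and $i_-(M)$ denote the numbers of positive and negative eigenvalues (with multiplicity) of a real symmetric matrix $M$. *)

From HB Require Import structures.
From mathcomp Require Import all_boot all_order all_algebra all_field.
Set Implicit Arguments. Unset Strict Implicit. Unset Printing Implicit Defensive.
Import Order.TTheory GRing.Theory Num.Theory.
Local Open Scope ring_scope.

(* Eigenvalues (with multiplicity) of a square complex-algebraic matrix:
   a sequence s of roots with char_poly A = \prod_(z <- s) ('X - z%:P)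
   (char_poly is monic, so lead_coef = 1); unique up to permutation. *)
Definition eigenvalues (n : nat) (A : 'M[algC]_n) : seq algC :=
  sval (closed_field_poly_normal (char_poly A)).

Definition i_pos (n : nat) (A : 'M[algC]_n) : nat :=
  count (fun z : algC => 0 < z) (eigenvalues A).
Definition i_neg (n : nat) (A : 'M[algC]_n) : nat :=
  count (fun z : algC => z < 0) (eigenvalues A).

Definition gcd_closed (s : seq nat) : Prop :=
  forall x y, x \in s -> y \in s -> gcdn x y \in s.

Definition lcm_mx (s : seq nat) : 'M[algC]_(size s) :=
  \matrix_(i < size s, j < size s) (lcmn (nth 0%N s i) (nth 0%N s j))%:R.

(* The LCM matrix is Hermitian, so its inertia can be read off its form
   q(x) = x [S] x^*: a vector with q > 0 forces a positive eigenvalue, and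
   two q-orthogonal vectors with q < 0 force two negative ones.  Let m < a < b
   be the three least elements of S and g = gcd(a, b); by GCD closure m divides
   every element of S and g lies in S, with g <= a < b.  Then u = m e_a - a e_m
   and v = g e_b - b e_g have q(u) = m a (m - a) < 0, q(v) = g b (g - b) < 0
   and B(u, v) = m (g lcm(a, b) - a b) = 0.  A positive diagonal entry gives
   i_+ >= 1, and i_+ + i_- <= n bounds i_- from above. *)
From mathcomp Require Import all_boot all_order all_algebra all_field.
From mathcomp Require Import zify ring.
Set Implicit Arguments. Unset Strict Implicit. Unset Printing Implicit Defensive.
Import Order.TTheory GRing.Theory Num.Theory Num.Def.

Local Open Scope ring_scope.
Local Open Scope sesquilinear_scope.

Notation hform A := (@form_of_matrix _ _ conjC 1 A).

Lemma char_poly_similar (R : comUnitRingType) n (P D : 'M[R]_n) :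
  P \in unitmx -> char_poly (invmx P *m D *m P) = char_poly D.
Proof.
move=> Pu; rewrite /char_poly /char_poly_mx.
have -> : 'X%:M - map_mx polyC (invmx P *m D *m P) =
    map_mx polyC (invmx P) *m ('X%:M - map_mx polyC D) *m map_mx polyC P.
  rewrite mulmxBr mulmxBl !map_mxM; congr (_ - _).
  by rewrite mul_mx_scalar -scalemxAl -map_mxM mulVmx // map_mx1 scalemx1.
by rewrite !det_mulmx mulrC mulrA -det_mulmx -map_mxM mulmxV // map_mx1 det1 mul1r.
Qed.

Lemma char_poly_eigenvalues n (A : 'M[algC]_n) :
  char_poly A = \prod_(z <- eigenvalues A) ('X - z%:P).
Proof.
rewrite /eigenvalues; case: closed_field_poly_normal => r /= Hr.
by rewrite {1}Hr (monicP (char_poly_monic A)) scale1r.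
Qed.

Lemma size_eigenvalues n (A : 'M[algC]_n) : size (eigenvalues A) = n.
Proof.
by have := size_char_poly A; rewrite char_poly_eigenvalues size_prod_XsubC => -[].
Qed.

Lemma i_pos_add_i_neg_le n (A : 'M[algC]_n) : (i_pos A + i_neg A <= n)%N.
Proof.
rewrite /i_pos /i_neg -count_predUI -[X in (_ <= X)%N](size_eigenvalues A).
have -> : count (predI (fun z : algC => 0 < z) (fun z => z < 0)) (eigenvalues A) = 0%N.
  by apply/eqP; rewrite -leqn0 leqNgt -has_count; apply/hasP => -[z _ /=]; rewrite lt_asym.
by rewrite addn0 count_size.
Qed.

Lemma eigenvalues_similar_diag n (A P : 'M[algC]_n) (d : 'rV_n) :
  P \in unitmx -> A = invmx P *m diag_mx d *m P ->
  perm_eq (eigenvalues A) [seq d 0 i | i <- enum 'I_n].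
Proof.
move=> Pu ->; apply: prod_XsubC_eq.
rewrite -char_poly_eigenvalues char_poly_similar // char_poly_trig ?diag_mx_is_trig //.
by rewrite big_map big_enum /=; apply: eq_bigr => i _; rewrite mxE eqxx mulr1n.
Qed.

Section HermitianInertia.
Variables (n : nat) (A : 'M[algC]_n).
Hypothesis hermA : A \is hermsymmx.

Let P := spectralmx A.
Let d := spectral_diag A.
Let coord (x : 'rV[algC]_n) := x *m invmx P.

Let P_unitary : P \is unitarymx. Proof. exact: spectral_unitarymx. Qed.

Let A_spectral : A = invmx P *m diag_mx d *m P.
Proof. exact/orthomx_spectralP/hermitian_normalmx. Qed.

Let d_real i : d 0 i \is Num.real.
Proof. exact: (mxOverP (hermitian_spectral_diag_real hermA)). Qed.

Lemma hform_spectral x y :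
  hform A x y = \sum_i d 0 i * (coord x 0 i * (coord y 0 i)^*).
Proof.
have coordC : P *m y ^t conjC = (coord y) ^t conjC.
  rewrite /coord invmx_unitary // trmx_mul map_mxM.
  by rewrite map_trmx trmxK -map_mx_comp (map_mx_id (@conjCK _)).
rewrite /form_of_matrix trace_mx11 A_spectral !mulmxA -/(coord x) -mulmxA coordC.
rewrite mxE; apply: eq_bigr => i _; rewrite mul_mx_diag !mxE; ring.
Qed.

Lemma hform_conj x y : hform A y x = (hform A x y)^*.
Proof. by rewrite (form_of_matrix_is_hermitian (HermitianMx hermA)) /= expr0 mul1r. Qed.

Lemma count_eigenvalues (p : pred algC) :
  count p (eigenvalues A) = #|[pred i : 'I_n | p (d 0 i)]|.
Proof.
rewrite (permP (eigenvalues_similar_diag (unitarymx_unit P_unitary) A_spectral)).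
by rewrite count_map enumT cardE /enum_mem size_filter.
Qed.

Lemma hform_ge0 x : (forall i, d 0 i < 0 -> coord x 0 i = 0) -> 0 <= hform A x x.
Proof.
move=> x0; rewrite hform_spectral; apply: sumr_ge0 => i _.
have [/x0 ->|d_ge0] := boolP (d 0 i < 0); first by rewrite !mul0r mulr0.
by rewrite mulr_ge0 ?mul_conjC_ge0 // real_leNgt ?real0.
Qed.

Lemma i_pos_gt0 u : 0 < hform A u u -> (0 < i_pos A)%N.
Proof.
move=> u_pos; rewrite /i_pos count_eigenvalues; apply/card_gt0P.
have [i d_pos|no_pos] := pickP [pred i : 'I_n | 0 < d 0 i]; first by exists i.
suff : hform A u u <= 0 by rewrite (lt_geF u_pos).
rewrite hform_spectral; apply: sumr_le0 => i _.
by rewrite mulr_le0_ge0 ?mul_conjC_ge0 // real_leNgt ?real0 // [_ < _]no_pos.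
Qed.

Lemma i_neg_gt1 u v :
  hform A u u < 0 -> hform A v v < 0 -> hform A u v = 0 -> (1 < i_neg A)%N.
Proof.
move=> u_neg v_neg uv0; rewrite /i_neg count_eigenvalues ltnNge; apply/negP => le1.
have vu0 : hform A v u = 0 by rewrite hform_conj uv0 conjC0.
have [k k_neg|no_neg] := pickP [pred i : 'I_n | d 0 i < 0]; last first.
  have : 0 <= hform A u u by apply: hform_ge0 => i; rewrite [_ < 0]no_neg.
  by rewrite (lt_geF u_neg).
have only_k i : d 0 i < 0 -> i = k.
  move=> i_neg; apply/eqP; apply: contraTT le1 => ne_ik.
  by rewrite -ltnNge; apply/card_gt1P; exists i, k.
(* Only the k-th eigenvalue can be negative: the combination x of u and v
   with vanishing k-th coordinate has q(x) >= 0, yet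
   q(x) = |v_k|^2 q(u) + |u_k|^2 q(v) < 0 in eigen-coordinates. *)
have ge0_off_k x : coord x 0 k = 0 -> 0 <= hform A x x.
  by move=> xk0; apply: hform_ge0 => i /only_k ->.
have [uk0|uk_neq0] := eqVneq (coord u 0 k) 0.
  by have := ge0_off_k u uk0; rewrite (lt_geF u_neg).
pose x := coord v 0 k *: u - coord u 0 k *: v.
have : 0 <= hform A x x.
  by apply: ge0_off_k; rewrite /x /coord mulmxBl -!scalemxAl !mxE mulrC subrr.
rewrite /x !(linearBl, linearZl, linearBr, linearZr) /= uv0 vu0 !mulr0.
rewrite subr0 sub0r mulrN opprK !mulrA lt_geF // ltr_wnDl //.
- by rewrite mulr_ge0_le0 ?mul_conjC_ge0 ?ltW.
- by rewrite pmulr_rlt0 // mul_conjC_gt0.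
Qed.

End HermitianInertia.

Lemma uniq_three_least (s : seq nat) : uniq s -> (3 <= size s)%N ->
  exists m a b, [/\ [/\ m \in s, a \in s & b \in s],
                    {in s, forall x, m <= x}%N & (m < a < b)%N].
Proof.
move=> s_uniq s_ge3; set t := sort leq s.
have t_lt : sorted ltn t.
  by rewrite ltn_sorted_uniq_leq sort_uniq s_uniq sort_sorted //; exact: leq_total.
have t_le : sorted leq t by apply: sort_sorted; exact: leq_total.
have size_t : size t = size s by rewrite size_sort.
have mem_t : t =i s by exact: mem_sort.
exists t`_0, t`_1, t`_2; split.
- by split; rewrite -mem_t mem_nth // size_t; lia.
- move=> x; rewrite -mem_t => xt; rewrite -(nth_index 0 xt).
  by apply: (sorted_leq_nth leq_trans leqnn) => //; rewrite inE ?index_mem // size_t; lia.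
- by rewrite !(sorted_ltn_nth ltn_trans 0 t_lt) // inE size_t; lia.
Qed.

Lemma gcd_closed_min_dvd (s : seq nat) m : gcd_closed s -> m \in s -> (0 < m)%N ->
  {in s, forall x, m <= x}%N -> {in s, forall x, m %| x}%N.
Proof.
move=> s_gcd ms m_gt0 m_min x xs.
have <- : gcdn m x = m.
  by apply/eqP; rewrite eqn_leq m_min ?s_gcd // dvdn_leq // dvdn_gcdl.
exact: dvdn_gcdr.
Qed.

Definition diff_vec n (i j : 'I_n) (a b : nat) : 'rV[algC]_n :=
  a%:R *: delta_mx 0 i - b%:R *: delta_mx 0 j.

Lemma lcm_mx_hermitian s : lcm_mx s \is hermsymmx.
Proof.
apply/is_hermitianmxP; rewrite expr0 scale1r; apply/matrixP => i j.
by rewrite !mxE conjC_nat lcmnC.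
Qed.

Lemma hform_lcm_delta s (i : 'I_(size s)) :
  hform (lcm_mx s) (delta_mx 0 i) (delta_mx 0 i) = (nth 0%N s i)%:R.
Proof. by rewrite rV_formee mxE (lcmn_idPr (dvdnn _)). Qed.

Lemma hform_lcm_diff_vec s (i j k l : 'I_(size s)) a b c e :
  let L (p q : 'I_(size s)) := lcmn (nth 0%N s p) (nth 0%N s q) in
  hform (lcm_mx s) (diff_vec i j a b) (diff_vec k l c e) =
  (a * c * L i k + b * e * L j l)%:R - (a * e * L i l + b * c * L j k)%:R.
Proof.
rewrite /diff_vec !(linearBl, linearBr, linearZl, linearZr) /= !rV_formee.
by rewrite !mxE !conjC_nat !natrD !natrM; ring.
Qed.

Lemma hform_lcm_dvd_lt0 s (i j : 'I_(size s)) :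
  let x := nth 0%N s i in let y := nth 0%N s j in
  (0 < x)%N -> (x %| y)%N -> (x < y)%N ->
  hform (lcm_mx s) (diff_vec j i x y) (diff_vec j i x y) < 0.
Proof.
move=> x y x_gt0 /lcmn_idPr lcm_xy lt_xy.
have lcm_yx : lcmn y x = y by rewrite lcmnC.
rewrite hform_lcm_diff_vec /= -/x -/y (lcmn_idPr (dvdnn x)) (lcmn_idPr (dvdnn y)).
by rewrite lcm_xy lcm_yx subr_lt0 ltr_nat; nia.
Qed.

Lemma hform_lcm_gcd_orthogonal s (im ia ib ig : 'I_(size s)) :
  let m := nth 0%N s im in let a := nth 0%N s ia in let b := nth 0%N s ib in
  nth 0%N s ig = gcdn a b -> (m %| a)%N -> (m %| b)%N ->
  hform (lcm_mx s) (diff_vec ia im m a) (diff_vec ib ig (gcdn a b) b) = 0.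
Proof.
move=> m a b g_def m_dvd_a m_dvd_b.
have lcm_mg : lcmn m (gcdn a b) = gcdn a b by apply/lcmn_idPr; rewrite dvdn_gcd m_dvd_a.
have lcm_ag : lcmn a (gcdn a b) = a by apply/lcmn_idPl; rewrite dvdn_gcdl.
have lcm_mb : lcmn m b = b by apply/lcmn_idPr.
have lcm_gcd := muln_lcm_gcd a b.
rewrite hform_lcm_diff_vec /= -/m -/a -/b g_def lcm_mg lcm_ag lcm_mb.
by apply/eqP; rewrite subr_eq0 eqr_nat; apply/eqP; nia.
Qed.

Theorem theorem5p2 (s : seq nat) (Hu : uniq s)
  (Hpos : forall x, x \in s -> (0 < x)%N) (Hg : gcd_closed s)
  (Hn : (3 <= size s)%N) :
  (1 <= i_pos (lcm_mx s))%N /\ (2 <= i_neg (lcm_mx s) <= (size s).-1)%N.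
Proof.
have herm := lcm_mx_hermitian s.
have [m [a [b [[m_in a_in b_in] m_min /andP[lt_ma lt_ab]]]]] := uniq_three_least Hu Hn.
have m_dvd := gcd_closed_min_dvd Hg m_in (Hpos m m_in) m_min.
have g_in : gcdn a b \in s by exact: Hg.
have lt_gb : (gcdn a b < b)%N.
  by apply: leq_ltn_trans lt_ab; rewrite dvdn_leq ?dvdn_gcdl ?Hpos.
have index_of x : x \in s -> {i : 'I_(size s) | nth 0%N s i = x}.
  by rewrite -index_mem => xs; exists (Ordinal xs); rewrite /= nth_index // -index_mem.
have [ig ig_def] := index_of _ g_in.
have [im ?] := index_of m m_in; have [ia ?] := index_of a a_in.
have [ib ?] := index_of b b_in; subst m a b.
have pos : (0 < i_pos (lcm_mx s))%N.
  by apply: (i_pos_gt0 herm (u := delta_mx 0 im)); rewrite hform_lcm_delta ltr0n Hpos.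
have neg : (1 < i_neg (lcm_mx s))%N.
  have huv := hform_lcm_gcd_orthogonal ig_def (m_dvd _ a_in) (m_dvd _ b_in).
  apply: (i_neg_gt1 herm _ _ huv).
  - by apply: hform_lcm_dvd_lt0; rewrite ?Hpos ?m_dvd.
  - rewrite -ig_def; apply: hform_lcm_dvd_lt0; rewrite ig_def ?gcdn_gt0 ?Hpos ?dvdn_gcdr //.
split => //; rewrite neg /=.
by have := i_pos_add_i_neg_le (lcm_mx s); lia.
Qed.
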